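(* Let $\star$ be a $t$-definer. For every $r>0$ there exists $r_1>0$ such that $a\star b<r$ for all $a,b\in[0,r_1)$, i.e. $[0,r_1)\star[0,r_1)\subseteq[0,r)$.
   Context: A $t$-definer is a function $\star:[0,\infty)\times[0,\infty)\to[0,\infty)$ such that for all $a,b,c\ge 0$: $a\star b=b\star a$; $a\star(b\star c)=(a\star b)\star c$; if $a\le b$ then $a\star c\le b\star c$; $a\star 0=a$; and $\star$ is continuous in its first variable with respect to the Euclidean topology. *)

From Stdlib Require Import Reals.
Open Scope R_scope.

(* A t-definer: an operation on [0,oo), modelled as a function R -> R -> R
   whose behaviour is only constrained on nonnegative arguments. *)
Definition t_definer (star : R -> R -> R) : Prop :=
  (forall a b, 0 <= a -> 0 <= b -> 0 <= star a b) /\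
  (forall a b, 0 <= a -> 0 <= b -> star a b = star b a) /\
  (forall a b c, 0 <= a -> 0 <= b -> 0 <= c ->
      star a (star b c) = star (star a b) c) /\
  (forall a b c, 0 <= a -> 0 <= b -> 0 <= c -> a <= b -> star a c <= star b c) /\
  (forall a, 0 <= a -> star a 0 = a) /\
  (forall b, 0 <= b -> forall a, 0 <= a ->
      forall eps, 0 < eps -> exists delta, 0 < delta /\
        forall x, 0 <= x -> Rabs (x - a) < delta -> Rabs (star x b - star a b) < eps).

(* Take c = r/2.  Since 0 star c = c and x |-> x star c is continuous at 0,
   there is d > 0 with a star c < c + r/2 = r whenever a < d; for a, b below
   min d c, monotonicity gives a star b <= a star c < r. *)
From Stdlib Require Import Reals Lra.
Open Scope R_scope.

Section TDefiner.

Variable star : R -> R -> R.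
Hypothesis Hstar : t_definer star.

Lemma t_definer_0l a : 0 <= a -> star 0 a = a.
Proof.
  destruct Hstar as [_ [Hcom [_ [_ [H0 _]]]]].
  intros Ha. rewrite Hcom by lra. now apply H0.
Qed.

Lemma t_definer_le_r a b c :
  0 <= a -> 0 <= b -> 0 <= c -> b <= c -> star a b <= star a c.
Proof.
  destruct Hstar as [_ [Hcom [_ [Hmon _]]]].
  intros Ha Hb Hc Hbc.
  rewrite (Hcom a b), (Hcom a c) by lra.
  now apply Hmon.
Qed.

Lemma t_definer_lt_near_0l c eps : 0 <= c -> 0 < eps ->
  exists d, 0 < d /\ forall a, 0 <= a < d -> star a c < c + eps.
Proof.
  destruct Hstar as [_ [_ [_ [_ [_ Hcont]]]]].
  intros Hc Heps.
  destruct (Hcont c Hc 0 (Rle_refl 0) eps Heps) as [d [Hd Hnear]].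
  exists d. split; [exact Hd|].
  intros a Ha.
  assert (Hdist : Rabs (star a c - star 0 c) < eps).
  { apply Hnear; [lra|]. rewrite Rminus_0_r, Rabs_right; lra. }
  rewrite t_definer_0l in Hdist by exact Hc.
  apply Rabs_def2 in Hdist. lra.
Qed.

End TDefiner.

Theorem lemma2p3 (star : R -> R -> R) (Hstar : t_definer star) :
  forall r, 0 < r -> exists r1, 0 < r1 /\
    forall a b, 0 <= a < r1 -> 0 <= b < r1 -> star a b < r.
Proof.
  intros r Hr.
  destruct (t_definer_lt_near_0l star Hstar (r / 2) (r / 2)) as [d [Hd Hnear]];
    [lra | lra |].
  exists (Rmin d (r / 2)). split; [apply Rmin_pos; lra|].
  intros a b Ha Hb.
  assert (Hmd := Rmin_l d (r / 2)). assert (Hmc := Rmin_r d (r / 2)).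
  assert (Hab : star a b <= star a (r / 2))
    by (apply (t_definer_le_r star Hstar); lra).
  assert (Hac : star a (r / 2) < r / 2 + r / 2) by (apply Hnear; lra).
  lra.
Qed.
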